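(* Let $G=\overline{B(K_m,K_n)}$ be word-representable and let $S$ be a semi-transitive orientation of $G$. Let $x$ be a vertex of type C, let $u$ be the last vertex (along the Hamiltonian path of the other clique) of the source-group of $x$ and let $v$ be the first vertex of the sink-group of $x$. Let $y\ne x$ be a vertex in the same clique as $x$. Then: (1) if $x\to y$, then $y$ is not a type A vertex adjacent to both $u$ and $v$; and if $y$ is of type C, then $u$ does not belong to the sink-group of $y$; (2) if $y\to x$, then $y$ is not a type B vertex adjacent to both $u$ and $v$; and if $y$ is of type C, then $v$ does not belong to the source-group of $y$.
   Context: $\overline{B(K_m,K_n)}$ denotes a graph whose vertex set is the disjoint union of two cliques $K_m$ and $K_n$ with arbitrary edges between them. An orientation is semi-transitive if it is acyclic and shortcut-free, where a shortcut is an induced subgraph on vertices $v_0,\dots,v_t$ ($t\ge 3$) such that $v_0\to\cdots\to v_t$ is a directed path, $v_0\to v_t$ is an edge, and some pair $v_i,v_j$ is non-adjacent. Such an orientation induces a transitive orientation on each clique, so each clique with $l$ vertices has a directed Hamiltonian path $p_1\to\cdots\to p_l$ with $p_i\to p_j$ iff $i<j$. For a vertex $x$ in one clique, with $p_1\to\cdots\to p_l$ the path of the other clique: $x$ is of type A if its neighbours in the other clique are consecutive vertices $p_a,\dots,p_b$ (possibly none) with all edges directed away from $x$; type B if the same holds with all edges directed towards $x$; type C if there are $1\le s<t\le l$ such that its neighbours in the other clique are exactly $p_1,\dots,p_s$ (with $p_i\to x$), called the source-group, and $p_t,\dots,p_l$ (with $x\to p_i$), called the sink-group. Types of $y$ are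 taken with respect to the same other clique. *)

From mathcomp Require Import all_boot.
Set Implicit Arguments. Unset Strict Implicit. Unset Printing Implicit Defensive.

(* Vertex set: disjoint union of the two cliques K_m (inl) and K_n (inr). *)
Definition vert (m n : nat) : finType := ('I_m + 'I_n)%type.

Definition side m n (z : vert m n) : bool := if z is inl _ then true else false.

Section Defs.
Variables (m n : nat).
Notation T := (vert m n).

(* E is a simple graph of the form co-B(K_m,K_n): symmetric, irreflexive,
   each of the two parts is a clique; edges between the parts arbitrary. *)
Definition cobip_graph (E : rel T) : Prop :=
  [/\ forall x y, E x y = E y x,
      forall x, ~~ E x x &
      forall x y, x != y -> side x = side y -> E x y].

Definition alternate (w : seq T) (x y : T) : bool :=
  sorted [rel a b | a != b] (filter (fun z => (z == x) || (z == y)) w).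

Definition word_representable (E : rel T) : Prop :=
  exists w : seq T, (forall x, x \in w) /\
    forall x y, x != y -> (E x y <-> alternate w x y).

Definition orientation (E O : rel T) : Prop :=
  [/\ forall x y, O x y -> E x y,
      forall x y, E x y -> O x y || O y x &
      forall x y, O x y -> ~~ O y x].

Definition acyclic (O : rel T) : Prop :=
  ~ exists (x : T) (s : seq T), path O x s /\ O (last x s) x.

(* A shortcut: distinct vertices v0 = x, v1..vt = s with t >= 3, a directed
   path v0 -> ... -> vt, the edge v0 -> vt, and a non-adjacent pair. *)
Definition has_shortcut (E O : rel T) : Prop :=
  exists (x : T) (s : seq T),
    [/\ 3 <= size s, uniq (x :: s), path O x s, O x (last x s) &
        exists a b, [/\ a \in x :: s, b \in x :: s, a != b & ~~ E a b]].

Definition semi_transitive (E O : rel T) : Prop :=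
  orientation E O /\ acyclic O /\ ~ has_shortcut E O.

(* Types, with respect to the other clique of x, whose Hamiltonian path
   p_1 -> ... -> p_l is the order given by O (p_i -> p_j iff i < j). *)
Definition other (x p : T) : bool := side p != side x.

Definition typeA (E O : rel T) (x : T) : Prop :=
  (forall p q r, other x p -> other x q -> other x r ->
     E x p -> E x r -> O p q -> O q r -> E x q) /\
  (forall p, other x p -> E x p -> O x p).

Definition typeB (E O : rel T) (x : T) : Prop :=
  (forall p q r, other x p -> other x q -> other x r ->
     E x p -> E x r -> O p q -> O q r -> E x q) /\
  (forall p, other x p -> E x p -> O p x).

(* source-group of x = {p_1..p_s} with p_s = u (all p with p = u or p -> u),
   sink-group of x = {p_t..p_l} with p_t = v (all p with p = v or v -> p),
   s < t i.e. u -> v. *)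
Definition in_source (O : rel T) (u p : T) : Prop := p = u \/ O p u.
Definition in_sink (O : rel T) (v p : T) : Prop := p = v \/ O v p.

Definition typeC_uv (E O : rel T) (x u v : T) : Prop :=
  [/\ other x u, other x v, O u v &
      forall p, other x p -> (E x p <-> in_source O u p \/ in_sink O v p)] /\
  (forall p, other x p -> in_source O u p -> O p x) /\
  (forall p, other x p -> in_sink O v p -> O x p).

Definition typeC (E O : rel T) (x : T) : Prop := exists u v, typeC_uv E O x u v.

End Defs.

From mathcomp Require Import all_boot.
Set Implicit Arguments. Unset Strict Implicit. Unset Printing Implicit Defensive.

(* Only acyclicity is needed: [u -> x -> v] by the choice of [u] and [v], so an
   edge [y -> u] when [x -> y], or [v -> y] when [y -> x], closes a directed
   triangle. *)

Section Orientation.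
Variables (m n : nat) (E O : rel (vert m n)).

Lemma acyclic_no_triangle (a b c : vert m n) : acyclic O -> O a b -> O b c -> ~ O c a.
Proof. by move=> Hac Hab Hbc Hca; apply: Hac; exists a, [:: b; c]; rewrite /= Hab Hbc. Qed.

Lemma other_eq_side (x y p : vert m n) : side y = side x -> other y p = other x p.
Proof. by rewrite /other => ->. Qed.

Lemma typeC_uv_source_to x u v : typeC_uv E O x u v -> O u x.
Proof. by case=> [[Hu _ _ _] [Hsrc _]]; apply: Hsrc => //; left. Qed.

Lemma typeC_uv_to_sink x u v : typeC_uv E O x u v -> O x v.
Proof. by case=> [[_ Hv _ _] [_ Hsnk]]; apply: Hsnk => //; left. Qed.

End Orientation.

Theorem mainTheorem13 (m n : nat) (E O : rel (vert m n))
  (HG : cobip_graph E) (Hwr : word_representable E) (HS : semi_transitive E O)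
  (x u v : vert m n) (HC : typeC_uv E O x u v)
  (y : vert m n) (Hyx : y != x) (Hside : side y = side x) :
  (O x y ->
     ~ (typeA E O y /\ E y u /\ E y v) /\
     (forall u' v', typeC_uv E O y u' v' -> ~ in_sink O v' u)) /\
  (O y x ->
     ~ (typeB E O y /\ E y u /\ E y v) /\
     (forall u' v', typeC_uv E O y u' v' -> ~ in_source O u' v)).
Proof.
case: HS => _ [Hac _].
have Hux := typeC_uv_source_to HC; have Hxv := typeC_uv_to_sink HC.
have [[Hu Hv _ _] _] := HC.
have Hu' : other y u by rewrite (other_eq_side _ Hside).
have Hv' : other y v by rewrite (other_eq_side _ Hside).
split=> Hdir; split.
- move=> [[_ HA] [Eu _]]; exact: (acyclic_no_triangle Hac Hdir (HA u Hu' Eu) Hux).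
- move=> u' v' [_ [_ Hsnk]] /(Hsnk u Hu') Hyu; exact: (acyclic_no_triangle Hac Hdir Hyu Hux).
- move=> [[_ HB] [_ Ev]]; exact: (acyclic_no_triangle Hac Hdir Hxv (HB v Hv' Ev)).
- move=> u' v' [_ [Hsrc _]] /(Hsrc v Hv') Hvy; exact: (acyclic_no_triangle Hac Hdir Hxv Hvy).
Qed.
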